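(* Let $\mathcal{I},\mathcal{J}$ be finite index sets, let $U_i>0$ ($i\in\mathcal{I}$) be bandwidths and $d_j\ge1$ ($j\in\mathcal{J}$) integer memory sizes, and let $\alpha_{ij}\ge0$ with $\sum_{i,j}\alpha_{ij}=1$. Let $C=\{1,\dots,m\}$ and $\bar\lambda_c>0$ for $c\in C$, $\bar\lambda=\sum_{c}\bar\lambda_c$, and $\rho=\bar\lambda/\sum_{i,j}\alpha_{ij}U_i$. For each $n$, consider the instance with $n$ servers, of which a fraction $\alpha_{ij}$ have bandwidth $U_i$ and memory size $d_j$, and content popularities $\lambda_c=n\bar\lambda_c$, and apply to it the \texttt{greedy} allocation algorithm: initialize $\mathsf{flow}(s)=U_s$, $\mathsf{deg}(s)=d_s$, $\mathsf{flow}(c)=\lambda_c$, $a_{sc}=0$; while some $(s,c)$ has $\mathsf{flow}(s)\mathsf{deg}(s)\mathsf{flow}(c)>0$, choose $s^*\in\arg\max_{s:\mathsf{deg}(s)>0}\mathsf{flow}(s)$, $c^*\in\arg\max_c\mathsf{flow}(c)$, let $f=\min(\mathsf{flow}(s^* ),\mathsf{flow}(c^* ))$, decrease $\mathsf{flow}(s^* )$ and $\mathsf{flow}(c^* )$ by $f$, decrease $\mathsf{deg}(s^* )$ by 1, and set $a_{s^*c^*}=1$. For $K\subseteq C$ let $q^{(n)}_{ijK}$ be the fraction of servers with bandwidth $U_i$ and memory size $d_j$ whose cache contents $\{c:a_{sc}=1\}$ equal $K$, let $q_{ijK}=\lim_n q^{(n)}_{ijK}$, write $q_{ijc}$ for $q_{ij\{c\}}$,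 and let $\theta_c=\sum_{i\in\mathcal{I},j\in\mathcal{J}}\alpha_{ij}U_iq_{ijc}$. Then $q_{ijK}=0$ for all $K$ with $|K|\ge2$. Furthermore, if $\rho\le1$ then $\theta_c=\bar\lambda_c$ for all $c\in C$. If $\rho>1$, the popularities are ordered as $\bar\lambda_1>\bar\lambda_2>\dots>\bar\lambda_m>0$, and $c^*\in\{1,\dots,m\}$ is such that \[ \frac{\bar\lambda}{\rho}\in\Big(\sum_{c'=1}^{c^*-1}\bar\lambda_{c'}-(c^*-1)\bar\lambda_{c^*},\ \sum_{c'=1}^{c^*}\bar\lambda_{c'}-c^*\bar\lambda_{c^*+1}\Big] \] (with the convention $\bar\lambda_{m+1}=0$), then \[ \theta_c=\begin{cases}\bar\lambda_c-\frac{1}{c^*}\Big[\sum_{c'=1}^{c^*}\bar\lambda_{c'}-\frac{\bar\lambda}{\rho}\Big], & 1\le c\le c^*,\\ 0, & c^*+1\le c\le m.\end{cases} \]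
   Context: A server with bandwidth $U$ can serve $U$ requests simultaneously; a server with memory size $d$ can store at most $d$ contents. $\bar\lambda/\rho=\sum_{i,j}\alpha_{ij}U_i$ is the per-server total bandwidth. The number $n\alpha_{ij}$ of servers of each type is assumed integral. *)

From HB Require Import structures.
From mathcomp Require Import all_boot all_order all_algebra.
From mathcomp Require Import all_classical all_reals all_analysis.
Set Implicit Arguments. Unset Strict Implicit. Unset Printing Implicit Defensive.
Import Order.TTheory GRing.Theory Num.Theory.
Import numFieldNormedType.Exports.
Local Open Scope ring_scope.

(* State of the greedy allocation algorithm on an instance with N servers
   (indexed by 'I_N) and m contents (indexed by 'I_m; content c+1 of the
   paper is the ordinal c). *)
Record gstate (R : realType) (N m : nat) := GState {
  gflow_s : 'I_N -> R;
  gdeg    : 'I_N -> nat;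
  gflow_c : 'I_m -> R;
  galloc  : {set 'I_N * 'I_m}   (* the pairs (s,c) with a_{sc} = 1 *)
}.

Definition genabled (R : realType) (N m : nat) (st : gstate R N m) : Prop :=
  exists (s : 'I_N) (c : 'I_m),
    0 < gflow_s st s * (gdeg st s)%:R * gflow_c st c.

(* one iteration of the loop, for any admissible choice of the argmaxes *)
Definition gstep (R : realType) (N m : nat) (st st' : gstate R N m) : Prop :=
  exists (s0 : 'I_N) (c0 : 'I_m),
    [/\ (0 < gdeg st s0)%N,
        (forall s, (0 < gdeg st s)%N -> gflow_s st s <= gflow_s st s0),
        (forall c, gflow_c st c <= gflow_c st c0) &
        let f := Num.min (gflow_s st s0) (gflow_c st c0) in
        st' = GState (fun s => if s == s0 then gflow_s st s - f else gflow_s st s)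
                     (fun s => if s == s0 then (gdeg st s).-1 else gdeg st s)
                     (fun c => if c == c0 then gflow_c st c - f else gflow_c st c)
                     ((s0, c0) |: galloc st)].

Inductive greach (R : realType) (N m : nat) : gstate R N m -> gstate R N m -> Prop :=
| greach_refl st : greach st st
| greach_step st st' st'' :
    genabled st -> gstep st st' -> greach st' st'' -> greach st st''.

Definition greedy_output (R : realType) (N m : nat)
  (Us : 'I_N -> R) (ds : 'I_N -> nat) (lam : 'I_m -> R)
  (a : {set 'I_N * 'I_m}) : Prop :=
  exists fin : gstate R N m,
    [/\ greach (GState Us ds lam finset.set0) fin, ~ genabled fin & galloc fin = a].

Definition cache (N m : nat) (a : {set 'I_N * 'I_m}) (s : 'I_N) : {set 'I_m} :=
  [set c | (s, c) \in a].

Definition qfrac (R : realType) (I J : finType) (N m : nat)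
  (tau : 'I_N -> I * J) (a : {set 'I_N * 'I_m}) (i : I) (j : J) (K : {set 'I_m}) : R :=
  #|[set s | (tau s == (i, j)) && (cache a s == K)]|%:R / #|[set s | tau s == (i, j)]|%:R.

(* popularity with the convention \bar\lambda_{m+1} = 0 (0-based indices) *)
Definition lbz (R : realType) (m : nat) (lb : nat -> R) (c : nat) : R :=
  if (c < m)%N then lb c else 0.

From HB Require Import structures.
From mathcomp Require Import all_boot all_order all_algebra.
From mathcomp Require Import all_classical all_reals all_analysis.
From mathcomp Require Import ring lra zify.
Import Order.TTheory GRing.Theory Num.Theory.
Import numFieldNormedType.Exports.
Local Open Scope ring_scope.
Set Implicit Arguments. Unset Strict Implicit. Unset Printing Implicit Defensive.

(* Along any run of greedy three invariants hold: (i) a nonnegative transport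
   plan supported on the allocation accounts for the bandwidth and popularity
   consumed so far; (ii) the servers caching at least two contents, plus the
   partially used ones (nonempty cache, residual bandwidth), are at most as
   many as the exhausted contents; (iii) once a content has been served, no
   residual popularity exceeds its own by more than max U, since greedy always
   serves a most popular content.  By (ii) at most 2m servers, a vanishing
   fraction, are multi-cache or partial, so q vanishes on sets of size >= 2
   and the servers caching only c supply, up to O(1), exactly the popularity
   of c consumed.  By (iii) the residual popularities are water-filled up to
   O(1), and conservation of flow fixes the water level.  After dividing by n
   all these errors vanish in the limit. *)

Lemma gt0_mul3 (R : numDomainType) (x y : R) (n : nat) :
  0 <= x -> 0 <= y -> 0 < x * n%:R * y -> [/\ 0 < x, (0 < n)%N & 0 < y].
Proof.
move=> x_ge0 y_ge0 xny_gt0; split.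
- by rewrite lt_def x_ge0 andbT; apply: contraTneq xny_gt0 => ->; rewrite !mul0r ltxx.
- by rewrite lt0n; apply: contraTneq xny_gt0 => ->; rewrite mulr0 mul0r ltxx.
- by rewrite lt_def y_ge0 andbT; apply: contraTneq xny_gt0 => ->; rewrite mulr0 ltxx.
Qed.

Lemma sum_nat_update (T : finType) (g g' : T -> nat) t :
  (forall s, s != t -> g' s = g s) -> (\sum_s g' s + g t = \sum_s g s + g' t)%N.
Proof.
move=> eq_g; rewrite (bigD1 t) //= [in RHS](bigD1 t) //= (eq_bigr _ eq_g).
by set S := (\sum_(i | _) _)%N; lia.
Qed.

Lemma cache_set0 (N m : nat) (s : 'I_N) :
  cache (finset.set0 : {set 'I_N * 'I_m}) s = finset.set0.
Proof. by apply/setP => c; rewrite !inE. Qed.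

Lemma cacheU1 (N m : nat) (A : {set 'I_N * 'I_m}) s0 c0 s :
  cache ((s0, c0) |: A) s = if s == s0 then c0 |: cache A s else cache A s.
Proof.
by apply/setP => c; rewrite !inE xpair_eqE; case: (s =P s0) => [->|_]; rewrite !inE.
Qed.

(* A step either saturates its server, which then stops being partial (but may
   start caching two contents), or it exhausts its content. *)
Lemma multi_partial_step (R : realDomainType) (m : nat) (K : {set 'I_m}) c0 (x y : R) :
  0 < x -> 0 < y ->
  ((1 < #|c0 |: K|) + ((c0 |: K != finset.set0) && (x - Num.min x y != 0)%R)
    <= (1 < #|K|) + ((K != finset.set0) && (x != 0)%R) + (y - Num.min x y == 0)%R)%N.
Proof.
move=> x_gt0 y_gt0.
have cardU : (#|c0 |: K| <= #|K|.+1)%N by rewrite cardsU1; case: (c0 \in K).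
have -> : (K != finset.set0) = (0 < #|K|)%N by rewrite lt0n cards_eq0.
rewrite (gt_eqF x_gt0); case: leP => _; rewrite subrr eqxx ?andbF ?andbT /=;
  [move: (_ == 0) | move: (_ && _)] => b; move: cardU.
all: by move: #|c0 |: K| #|K| => u k; lia.
Qed.

Section GreedyRun.
Variables (R : realType) (N m : nat).
Implicit Types (st : gstate R N m) (s : 'I_N) (c : 'I_m).

Definition gmulti st s : bool := (1 < #|cache (galloc st) s|)%N.
Definition gpartial st s : bool :=
  (cache (galloc st) s != finset.set0) && (gflow_s st s != 0).
Definition gbad st : nat := (\sum_s (gmulti st s + gpartial st s))%N.
Definition gdrained st : nat := (\sum_c (gflow_c st c == 0)%R)%N.

Definition gupdate st s0 c0 (f : R) : gstate R N m :=
  GState (fun s => if s == s0 then gflow_s st s - f else gflow_s st s)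
         (fun s => if s == s0 then (gdeg st s).-1 else gdeg st s)
         (fun c => if c == c0 then gflow_c st c - f else gflow_c st c)
         ((s0, c0) |: galloc st).

Lemma gdrained_le st : (gdrained st <= m)%N.
Proof.
rewrite -[m]card_ord -sum1_card.
by apply: leq_sum => c _; case: (_ == _).
Qed.

Lemma gbad_update st s0 c0 : 0 < gflow_s st s0 -> 0 < gflow_c st c0 ->
  (gbad st <= gdrained st)%N ->
  (gbad (gupdate st s0 c0 (Num.min (gflow_s st s0) (gflow_c st c0)))
    <= gdrained (gupdate st s0 c0 (Num.min (gflow_s st s0) (gflow_c st c0))))%N.
Proof.
move=> fs0 fc0 bad; set st' := gupdate _ _ _ _.
have badE : (gbad st' + (gmulti st s0 + gpartial st s0)
             = gbad st + (gmulti st' s0 + gpartial st' s0))%N.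
  by apply: sum_nat_update => s ne; rewrite /gmulti /gpartial /= cacheU1 (negbTE ne).
have drainedE : (gdrained st' + (gflow_c st c0 == 0)%R
                 = gdrained st + (gflow_c st' c0 == 0)%R)%N.
  by apply: sum_nat_update => c ne; rewrite /= (negbTE ne).
have step : (gmulti st' s0 + gpartial st' s0
             <= gmulti st s0 + gpartial st s0 + (gflow_c st' c0 == 0)%R)%N.
  by rewrite /gmulti /gpartial /= cacheU1 !eqxx; exact: multi_partial_step.
rewrite (gt_eqF fc0) in drainedE.
by move: (gflow_c st' c0 == 0)%R badE drainedE step => z; lia.
Qed.

Variables (Us : 'I_N -> R) (ds : 'I_N -> nat) (lam : 'I_m -> R) (Um : R).
Hypotheses (Us_le : forall s, Us s <= Um) (Um_ge0 : 0 <= Um).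
Hypothesis ds_gt0 : forall s, (0 < ds s)%N.

Definition gtransport st (x : 'I_N -> 'I_m -> R) : Prop :=
  [/\ forall s c, 0 <= x s c,
      forall s c, (s, c) \notin galloc st -> x s c = 0,
      forall s, \sum_c x s c = Us s - gflow_s st s &
      forall c, \sum_s x s c = lam c - gflow_c st c].

Record ginv st : Prop := GInv {
  ginv_flow_s : forall s, 0 <= gflow_s st s <= Us s;
  ginv_flow_c : forall c, 0 <= gflow_c st c <= lam c;
  ginv_deg : forall s, cache (galloc st) s = finset.set0 -> gdeg st s = ds s;
  ginv_bad : (gbad st <= gdrained st)%N;
  ginv_transport : exists x, gtransport st x;
  ginv_level : forall c, gflow_c st c < lam c ->
                 forall c', gflow_c st c' <= gflow_c st c + Um }.

Lemma ginv_init : (forall s, 0 <= Us s) -> (forall c, 0 <= lam c) ->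
  ginv (GState Us ds lam finset.set0).
Proof.
move=> Us_ge0 lam_ge0; split => //=.
- by move=> s; rewrite Us_ge0 lexx.
- by move=> c; rewrite lam_ge0 lexx.
- by rewrite /gbad big1 // => s _; rewrite /gmulti /gpartial cache_set0 cards0 eqxx.
- by exists (fun _ _ => 0); split => // [s|c]; rewrite big1 ?subrr.
- by move=> c; rewrite ltxx.
Qed.

Lemma gtransport_update st x s0 c0 f : 0 <= f -> gtransport st x ->
  gtransport (gupdate st s0 c0 f)
             (fun s c => x s c + (if (s == s0) && (c == c0) then f else 0)).
Proof.
move=> f_ge0 [x_ge0 x_supp x_row x_col]; split => /=.
- by move=> s c; case: ifP => _; rewrite ?addr0 // addr_ge0.
- move=> s c; rewrite in_setU1 negb_or xpair_eqE => /andP[/negbTE -> /x_supp ->].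
  by rewrite addr0.
- move=> s; rewrite big_split /= x_row; case: (s =P s0) => [->|_] /=.
  + by rewrite (bigD1 c0) //= eqxx big1 => [|c /negbTE ->]; rewrite ?addr0 //; lra.
  + by rewrite big1 // addr0.
- move=> c; rewrite big_split /= x_col; case: (c =P c0) => [->|_] /=.
  + by rewrite (bigD1 s0) //= eqxx big1 => [|s /negbTE ->]; rewrite ?addr0 //; lra.
  + by rewrite big1 => [|s _]; rewrite ?andbF ?addr0.
Qed.

Lemma ginv_step st st' : ginv st -> genabled st -> gstep st st' -> ginv st'.
Proof.
move=> [fs_bd fc_bd deg_empty bad [x tr] level] [s1 [c1 pos1]].
move=> [s0 [c0 [deg0 s0_max c0_max ->]]].
have [/andP[fs_ge0 _] /andP[fc_ge0 _]] := (fs_bd s1, fc_bd c1).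
have [fs1 deg1 fc1] := gt0_mul3 fs_ge0 fc_ge0 pos1.
have fs0 : 0 < gflow_s st s0 := lt_le_trans fs1 (s0_max s1 deg1).
have fc0 : 0 < gflow_c st c0 := lt_le_trans fc1 (c0_max c1).
change (ginv (gupdate st s0 c0 (Num.min (gflow_s st s0) (gflow_c st c0)))).
set f := Num.min _ _.
have f_ge0 : 0 <= f by rewrite /f le_min !ltW.
have f_le_s : f <= gflow_s st s0 by rewrite /f ge_min lexx.
have f_le_c : f <= gflow_c st c0 by rewrite /f ge_min lexx orbT.
split => /=.
- move=> s; case: eqP => [->|_]; last exact: fs_bd.
  by have /andP[? ?] := fs_bd s0; apply/andP; split; lra.
- move=> c; case: eqP => [->|_]; last exact: fc_bd.
  by have /andP[? ?] := fc_bd c0; apply/andP; split; lra.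
- move=> s; rewrite cacheU1; case: eqP => [_ cache0|_]; last exact: deg_empty.
  by have := setU11 c0 (cache (galloc st) s); rewrite cache0 inE.
- exact: gbad_update.
- by exists (fun s c => x s c + (if (s == s0) && (c == c0) then f else 0));
    apply: gtransport_update.
- move=> c; case: (c =P c0) => [->|_] served c'.
  + have /andP[_ fs_le] := fs_bd s0; have := Us_le s0.
    by have := c0_max c'; case: (c' =P c0) => _; lra.
  + by have := level c served c'; case: (c' =P c0) => _; lra.
Qed.

Lemma ginv_reach st st' : greach st st' -> ginv st -> ginv st'.
Proof. by elim=> // ? ? ? enabled step _ IH inv; apply/IH/(ginv_step inv). Qed.

Lemma greedy_output_final a : (forall s, 0 <= Us s) -> (forall c, 0 <= lam c) ->
  greedy_output Us ds lam a -> exists st, [/\ ginv st, ~ genabled st & galloc st = a].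
Proof.
move=> Us_ge0 lam_ge0 [st [reach stop <-]]; exists st; split => //.
exact: ginv_reach reach (ginv_init Us_ge0 lam_ge0).
Qed.

Lemma ginv_multi_sum st : ginv st -> (\sum_s gmulti st s <= m)%N.
Proof.
move=> inv; apply: leq_trans (leq_trans (ginv_bad inv) (gdrained_le st)).
by apply: leq_sum => s _; apply: leq_addr.
Qed.

Lemma ginv_partial_sum st : ginv st -> (\sum_s gpartial st s <= m)%N.
Proof.
move=> inv; apply: leq_trans (leq_trans (ginv_bad inv) (gdrained_le st)).
by apply: leq_sum => s _; apply: leq_addl.
Qed.

Lemma ginv_multi_card st : ginv st -> (#|[set s | gmulti st s]| <= m)%N.
Proof.
move=> /ginv_multi_sum; apply: leq_trans.
by rewrite -sum1dep_card big_mkcond; apply: leq_sum => s _; case: gmulti.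
Qed.

Lemma transport_single_cache st x s c : ginv st -> gtransport st x ->
  - ((gpartial st s)%:R * Um)
    <= x s c - (if cache (galloc st) s == [set c] then Us s else 0)
    <= (gmulti st s)%:R * Um.
Proof.
move=> inv [x_ge0 x_supp x_row _].
have /andP[fs_ge0 fs_le] := ginv_flow_s inv s; have Us_le_s := Us_le s.
have partial_ge0 := mulr_ge0 (ler0n R (gpartial st s)) Um_ge0.
have multi_ge0 := mulr_ge0 (ler0n R (gmulti st s)) Um_ge0.
have x_le : x s c <= Us s - gflow_s st s.
  by rewrite -x_row (bigD1 c) //= lerDl sumr_ge0.
have xc_ge0 := x_ge0 s c; case: ifP => [/eqP single|not_single].
- have -> : x s c = Us s - gflow_s st s.
    rewrite -x_row (bigD1 c) //= big1 ?addr0 // => c' ne.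
    apply: x_supp; apply: contra ne => sc'.
    have : c' \in cache (galloc st) s by rewrite inE.
    by rewrite single inE.
  have [->|fs_ne0] := eqVneq (gflow_s st s) 0; first by apply/andP; split; lra.
  have -> : gpartial st s.
    by rewrite /gpartial fs_ne0 single andbT; apply/set0Pn; exists c; rewrite inE.
  by rewrite mul1r; apply/andP; split; lra.
- case c_in : (c \in cache (galloc st) s); last first.
    by rewrite inE in c_in; rewrite x_supp ?c_in //; apply/andP; split; lra.
  have -> : gmulti st s.
    rewrite /gmulti ltnNge; apply: contraFN not_single => le1.
    by rewrite eq_sym eqEcard finset.sub1set c_in cards1.
  by rewrite mul1r; apply/andP; split; lra.
Qed.

Lemma ginv_single_cache_bound st c : ginv st ->
  `|\sum_(s | cache (galloc st) s == [set c]) Us s - (lam c - gflow_c st c)|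
    <= m%:R * Um.
Proof.
move=> inv; have [x tr] := ginv_transport inv; have [_ _ _ x_col] := tr.
set dev := fun s => x s c - (if cache (galloc st) s == [set c] then Us s else 0).
have sum_dev : \sum_s dev s
               = (lam c - gflow_c st c) - \sum_(s | cache (galloc st) s == [set c]) Us s.
  by rewrite sumrB x_col [in RHS]big_mkcond.
have dev_lo : - ((\sum_s gpartial st s)%:R * Um) <= \sum_s dev s.
  rewrite natr_sum mulr_suml -sumrN; apply: ler_sum => s _.
  by case/andP: (transport_single_cache s c inv tr).
have dev_hi : \sum_s dev s <= (\sum_s gmulti st s)%:R * Um.
  rewrite natr_sum mulr_suml; apply: ler_sum => s _.
  by case/andP: (transport_single_cache s c inv tr).
have partial_le : (\sum_s gpartial st s)%:R * Um <= m%:R * Um.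
  by rewrite ler_wpM2r // ler_nat; exact: ginv_partial_sum.
have multi_le : (\sum_s gmulti st s)%:R * Um <= m%:R * Um.
  by rewrite ler_wpM2r // ler_nat; exact: ginv_multi_sum.
rewrite distrC -sum_dev ler_norml; apply/andP; split; lra.
Qed.

Lemma ginv_flow_balance st : ginv st ->
  \sum_c gflow_c st c = \sum_c lam c - \sum_s Us s + \sum_s gflow_s st s.
Proof.
move=> [_ _ _ _ [x [_ _ x_row x_col]] _].
have : \sum_c (lam c - gflow_c st c) = \sum_s (Us s - gflow_s st s).
  rewrite -(eq_bigr _ (fun c _ => x_col c)) exchange_big /=.
  by apply: eq_bigr => s _; rewrite x_row.
rewrite !sumrB; lra.
Qed.

(* Once greedy stops while some popularity is left, every server with
   residual bandwidth has used up its memory, so it is partial. *)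
Lemma final_residual_bandwidth st : ginv st -> ~ genabled st ->
  (exists c, 0 < gflow_c st c) -> \sum_s gflow_s st s <= m%:R * Um.
Proof.
move=> inv stop [c1 fc1].
have fs_le s : gflow_s st s <= (gpartial st s)%:R * Um.
  have /andP[fs_ge0 fs_le_Us] := ginv_flow_s inv s; have Us_le_s := Us_le s.
  have [->|fs_ne0] := eqVneq (gflow_s st s) 0; first by rewrite mulr_ge0.
  have deg0 : gdeg st s = 0%N.
    apply/eqP; rewrite -leqn0 leqNgt; apply: contra_notN stop => deg_gt0.
    by exists s, c1; rewrite !mulr_gt0 ?ltr0n // lt_def fs_ne0.
  have -> : gpartial st s.
    rewrite /gpartial fs_ne0 andbT; apply/negP => /eqP /(ginv_deg inv).
    by rewrite deg0 => ds0; have := ds_gt0 s; rewrite -ds0.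
  by rewrite mul1r; lra.
apply: le_trans (ler_sum _ (fun s _ => fs_le s)) _.
rewrite -mulr_suml -natr_sum ler_wpM2r // ler_nat; exact: ginv_partial_sum.
Qed.

End GreedyRun.

Section WaterFilling.
Variables (R : realFieldType) (m : nat) (lam : 'I_m -> R).

Lemma level_approx (F : 'I_m -> R) (M Um : R) : 0 <= Um ->
  (forall c, 0 <= F c <= lam c) -> (forall c, F c <= M) ->
  (forall c, F c < lam c -> M <= F c + Um) ->
  forall c, Num.min (lam c) M - Um <= F c <= Num.min (lam c) M.
Proof.
move=> Um_ge0 F_bd F_le_M M_le c.
have /andP[F_ge0 F_le] := F_bd c; have FM := F_le_M c.
by case: (ltP (F c) (lam c)) => [/M_le|] F_lam; case: (leP (lam c) M) => ?;
  apply/andP; split; lra.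
Qed.

Variable c0 : 'I_m.
Hypothesis lam_max : forall c, lam c <= lam c0.

Lemma sum_min_level_gap x y : x <= y -> y <= lam c0 ->
  y - x <= \sum_c Num.min (lam c) y - \sum_c Num.min (lam c) x.
Proof.
move=> xy y_le; rewrite -sumrB (bigD1 c0) //=.
have -> : Num.min (lam c0) y - Num.min (lam c0) x = y - x.
  by case: (leP (lam c0) y) => ?; case: (leP (lam c0) x) => ?; lra.
rewrite lerDl; apply: sumr_ge0 => c _.
by case: (leP (lam c) y) => ?; case: (leP (lam c) x) => ?; lra.
Qed.

(* The residual popularities [F] of a greedy run are water-filled at the level
   of their maximum, up to [Um]; the sum pins that level down to [L]. *)
Lemma waterfill_close (F : 'I_m -> R) (Um T L : R) : 0 <= Um ->
  (forall c, 0 <= F c <= lam c) ->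
  (forall c, F c < lam c -> forall c', F c' <= F c + Um) ->
  T <= \sum_c F c <= T + m%:R * Um ->
  \sum_c Num.min (lam c) L = T -> L <= lam c0 ->
  forall c, `|F c - Num.min (lam c) L| <= (m%:R + m%:R + 1) * Um.
Proof.
move=> Um_ge0 F_bd F_level /andP[T_le sum_le] sum_L L_le.
have [cM _ F_max] := @arg_maxP _ R _ c0 xpredT F isT.
set M := Num.min (F cM) (lam c0).
have M_le : M <= lam c0 by rewrite ge_min lexx orbT.
have approx : forall c, Num.min (lam c) M - Um <= F c <= Num.min (lam c) M.
  apply: (level_approx Um_ge0 F_bd) => c.
  - rewrite /M le_min; apply/andP; split; first exact: F_max.
    by have /andP[_ F_le] := F_bd c; apply: le_trans F_le (lam_max c).
  - by move=> /F_level /(_ cM) ?; rewrite /M ge_min; apply/orP; left.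
have sum_M_lo : \sum_c F c <= \sum_c Num.min (lam c) M.
  by apply: ler_sum => c _; case/andP: (approx c).
have sum_M_hi : \sum_c Num.min (lam c) M <= \sum_c F c + m%:R * Um.
  rewrite -[m in m%:R]card_ord -sum1_card natr_sum mulr_suml -big_split /=.
  by apply: ler_sum => c _; case/andP: (approx c); rewrite mul1r; lra.
have gap : `|M - L| <= (m%:R + m%:R) * Um.
  rewrite ler_norml; case: (leP M L) => ML.
  - by have := sum_min_level_gap ML L_le; rewrite sum_L => ?; apply/andP; split; lra.
  - by have := sum_min_level_gap (ltW ML) M_le; rewrite sum_L => ?; apply/andP; split; lra.
move=> c; have /andP[F_lo F_hi] := approx c; move: gap; rewrite !ler_norml.
move=> /andP[gap_lo gap_hi].
by case: (leP (lam c) M) => ? in F_lo F_hi *; case: (leP (lam c) L) => ?;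
  apply/andP; split; lra.
Qed.

End WaterFilling.

Section WaterLevel.
Variables (R : realType) (m : nat) (lb : nat -> R).
Hypothesis lb_decr : forall c, (c.+1 < m)%N -> lb c.+1 < lb c.

Lemma lb_nonincreasing c c' : (c <= c')%N -> (c' < m)%N -> lb c' <= lb c.
Proof.
elim: c' => [|c' IH]; first by rewrite leqn0 => /eqP ->.
rewrite leq_eqVlt => /orP[/eqP -> //|lt_cc'] lt_c'm.
exact: le_trans (ltW (lb_decr lt_c'm)) (IH lt_cc' (ltnW lt_c'm)).
Qed.

Definition water_level (B : R) (cs : nat) : R :=
  (cs.+1%:R)^-1 * (\sum_(0 <= c < cs.+1) lb c - B).

Variables (B : R) (cs : 'I_m).
Hypotheses (B_gt : \sum_(0 <= c < cs) lb c - cs%:R * lb cs < B)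
           (B_le : B <= \sum_(0 <= c < cs.+1) lb c - cs.+1%:R * lbz m lb cs.+1).

Lemma water_level_bounds : lbz m lb cs.+1 <= water_level B cs < lb cs.
Proof.
set L := water_level B cs.
have L_eq : L * cs.+1%:R = \sum_(0 <= c < cs.+1) lb c - B.
  by rewrite /L /water_level mulrC mulrA mulfV ?mul1r // pnatr_eq0.
move: B_gt B_le L_eq; rewrite big_nat_recr //= -natr1 => lo hi L_eq.
have cs_ge0 : 0 <= cs%:R :> R by [].
apply/andP; split; nra.
Qed.

Lemma min_water_level (c : 'I_m) :
  Num.min (lb c) (water_level B cs) = if (c <= cs)%N then water_level B cs else lb c.
Proof.
have /andP[L_ge L_lt] := water_level_bounds.
case: ifP => c_cs.
- by apply/min_idPr; apply: le_trans (ltW L_lt) (lb_nonincreasing c_cs (ltn_ord cs)).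
- have cs_c : (cs.+1 <= c)%N by rewrite ltnNge c_cs.
  apply/min_idPl; apply: le_trans _ L_ge.
  rewrite /lbz (leq_ltn_trans cs_c (ltn_ord c)).
  exact: lb_nonincreasing cs_c (ltn_ord c).
Qed.

Lemma sum_min_water_level :
  \sum_(c < m) Num.min (lb c) (water_level B cs) = \sum_(0 <= c < m) lb c - B.
Proof.
rewrite (eq_bigr _ (fun c _ => min_water_level c)).
rewrite -(big_mkord xpredT (fun c => if (c <= cs)%N then water_level B cs else lb c)).
rewrite !(@big_cat_nat _ _ _ cs.+1 0 m) ?ltn_ord //=.
rewrite (eq_big_nat _ _ (F2 := fun=> water_level B cs)); last first.
  by move=> c /andP[_]; rewrite ltnS => ->.
rewrite [X in _ + X](eq_big_nat _ _ (F2 := lb)); last first.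
  by move=> c /andP[]; rewrite ltnNge => /negbTE ->.
rewrite sumr_const_nat subn0 -[water_level B cs *+ _]mulr_natl /water_level.
by rewrite mulrA mulfV ?pnatr_eq0 // mul1r addrAC.
Qed.

End WaterLevel.

Lemma cvg_eq_of_dist_le_inv (R : realType) (u : nat -> R) (l t C : R)
    (n : nat -> nat) :
  (u @ \oo --> l)%classic -> 0 <= C ->
  (forall M, exists k0, forall k, (k0 <= k)%N -> (M <= n k)%N) ->
  (forall k, (0 < n k)%N -> `|u k - t| <= C / (n k)%:R) -> l = t.
Proof.
move=> u_l C_ge0 n_oo u_t.
suff u_t' : (u @ \oo --> t)%classic by exact: cvg_unique u_l u_t'.
apply/cvgrPdist_le => e e_gt0.
have [k0 large] := n_oo (Num.bound (C / e)).+1.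
exists k0 => // k /= k0_k; have n_large := large k k0_k.
have n_gt0 : (0 < n k)%N by apply: leq_trans n_large.
have Ce_lt : C / e < (n k)%:R.
  apply: lt_le_trans (archi_boundP (divr_ge0 C_ge0 (ltW e_gt0))) _.
  by rewrite ler_nat; apply: leq_trans n_large; apply: leqnSn.
rewrite distrC; apply: le_trans (u_t k n_gt0) _.
by rewrite ler_pdivrMr ?ltr0n // mulrC -ler_pdivrMr // ltW.
Qed.

Lemma sum_by_type (R : nmodType) (I J : finType) (n : nat) (tau : 'I_n -> I * J)
    (P : pred 'I_n) (G : I * J -> R) :
  \sum_(s | P s) G (tau s)
  = \sum_i \sum_j G (i, j) *+ #|[set s | (tau s == (i, j)) && P s]|.
Proof.
rewrite (partition_big tau predT) //= pair_big /=; apply: eq_bigr => -[i j] _ /=.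
rewrite (eq_bigr (fun=> G (i, j))) => [|s /andP[_ /eqP ->] //].
by rewrite sumr_const; congr (_ *+ _); apply: eq_card => s; rewrite inE andbC.
Qed.

(* Without implicit arguments, so that the section variable [tau] keeps its
   instance index [k] explicit. *)
Unset Implicit Arguments.
Section Asymptotics.
Variables (R : realType) (I J : finType) (U : I -> R) (d : J -> nat)
  (alpha : I -> J -> R) (m : nat) (lb : nat -> R) (N : nat -> nat)
  (tau : forall k, 'I_(N k) -> I * J) (a : forall k, {set 'I_(N k) * 'I_m})
  (q : I -> J -> {set 'I_m} -> R).
Hypotheses (U_gt0 : forall i, 0 < U i) (d_ge1 : forall j, (1 <= d j)%N)
  (alpha_ge0 : forall i j, 0 <= alpha i j) (lb_gt0 : forall c, (c < m)%N -> 0 < lb c).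
Hypothesis N_oo : forall M, exists k0, forall k, (k0 <= k)%N -> (M <= N k)%N.
Hypothesis card_type :
  forall k i j, #|[set s | tau k s == (i, j)]|%:R = (N k)%:R * alpha i j.
Hypothesis a_greedy : forall k,
  greedy_output (fun s => U (tau k s).1) (fun s => d (tau k s).2)
                (fun c : 'I_m => (N k)%:R * lb c) (a k).
Hypothesis q_lim : forall i j K,
  ((fun k => qfrac R (tau k) (a k) i j K) @ \oo --> q i j K)%classic.
Set Implicit Arguments.

Definition lbar : R := \sum_(0 <= c < m) lb c.
Definition cap : R := \sum_i \sum_j alpha i j * U i.
Definition theta (c : 'I_m) : R := \sum_i \sum_j alpha i j * U i * q i j [set c].
Definition Ubound : R := \sum_i U i.
Definition served k (K : {set 'I_m}) : R :=
  \sum_(s | cache (a k) s == K) U (tau k s).1.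

Lemma Ubound_ge i : U i <= Ubound.
Proof. by rewrite /Ubound (bigD1 i) //= lerDl sumr_ge0 // => i' _; apply: ltW. Qed.

Lemma Ubound_ge0 : 0 <= Ubound.
Proof. by apply: sumr_ge0 => i _; apply: ltW. Qed.

Lemma cap_gt0 : \sum_i \sum_j alpha i j = 1 -> 0 < cap.
Proof.
move=> alpha_sum1.
have summand_ge0 i j : 0 <= alpha i j * U i := mulr_ge0 (alpha_ge0 i j) (ltW (U_gt0 i)).
have [i /andP[_ alpha_i]] : exists i, true && (0 < \sum_j alpha i j).
  by apply: psumr_neq0P => [i _|/eqP]; [exact: sumr_ge0 | rewrite alpha_sum1 oner_eq0].
have [j /andP[_ alpha_ij]] : exists j, true && (0 < alpha i j).
  by apply: psumr_neq0P => [j _|/eqP]; [exact: alpha_ge0 | rewrite gt_eqF].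
apply: lt_le_trans (mulr_gt0 alpha_ij (U_gt0 i)) _.
rewrite /cap (bigD1 i) //= (bigD1 j) //= -addrA lerDl.
by rewrite addr_ge0 ?sumr_ge0 // => i' _; rewrite sumr_ge0.
Qed.

Lemma sum_bandwidth k : \sum_s U (tau k s).1 = (N k)%:R * cap.
Proof.
rewrite (sum_by_type (tau k) xpredT (fun p => U p.1)) /cap mulr_sumr.
apply: eq_bigr => i _; rewrite mulr_sumr; apply: eq_bigr => j _ /=.
under eq_finset do rewrite andbT.
by rewrite -[U i *+ _]mulr_natr card_type mulrCA [U i * _]mulrC.
Qed.

Lemma qfrac_served k K :
  \sum_i \sum_j alpha i j * U i * qfrac R (tau k) (a k) i j K = served k K / (N k)%:R.
Proof.
rewrite /served (sum_by_type (tau k) _ (fun p => U p.1)) mulr_suml.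
apply: eq_bigr => i _; rewrite mulr_suml; apply: eq_bigr => j _ /=.
rewrite /qfrac card_type -[U i *+ _]mulr_natr.
have [na0|] := eqVneq ((N k)%:R * alpha i j) 0.
- have -> : #|[set s | (tau k s == (i, j)) && (cache (a k) s == K)]| = 0%N.
    apply/eqP; rewrite -leqn0 -(ler_nat R) mulr0n -na0 -card_type ler_nat.
    by apply: subset_leq_card; apply/fintype.subsetP => s; rewrite !inE => /andP[].
  by rewrite na0 !(mulr0, mul0r).
- rewrite mulf_eq0 negb_or => /andP[n0 a0].
  by field; apply/andP.
Qed.

Lemma cvg_served c : ((fun k => served k [set c] / (N k)%:R) @ \oo --> theta c)%classic.
Proof.
under eq_fun do rewrite -qfrac_served.
apply: cvg_big => [|i _]; first exact: add_continuous.
apply: cvg_big => [|j _]; first exact: add_continuous.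
by apply: cvgMl_tmp; apply: q_lim.
Qed.

Lemma instance_final k : exists st,
  [/\ ginv (fun s => U (tau k s).1) (fun s => d (tau k s).2)
           (fun c : 'I_m => (N k)%:R * lb c) Ubound st,
      ~ genabled st & galloc st = a k].
Proof.
apply: greedy_output_final (a_greedy k) => [s|s|c]; first exact: Ubound_ge.
- exact/ltW/U_gt0.
- by rewrite mulr_ge0 // ltW // lb_gt0.
Qed.

Lemma multi_cache_card k : (#|[set s | 1 < #|cache (a k) s|]| <= m)%N.
Proof. by have [st [inv _ <-]] := instance_final k; exact: ginv_multi_card inv. Qed.

(* [F] plays the role of the residual popularities flow(c) of a final state. *)
Definition residual_spec k (F : 'I_m -> R) : Prop :=
  let n := (N k)%:R in
  [/\ forall c, `|served k [set c] - (n * lb c - F c)| <= m%:R * Ubound,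
      forall c, 0 <= F c <= n * lb c,
      forall c, F c < n * lb c -> forall c', F c' <= F c + Ubound,
      n * (lbar - cap) <= \sum_c F c &
      (exists c, 0 < F c) -> \sum_c F c <= n * (lbar - cap) + m%:R * Ubound].

Lemma residual_exists k : exists F, residual_spec k F.
Proof.
have [st [inv stop alloc]] := instance_final k; exists (gflow_c st).
have balance := ginv_flow_balance inv.
rewrite -mulr_sumr -(big_mkord xpredT lb) sum_bandwidth -/lbar in balance.
split.
- move=> c; rewrite /served -alloc.
  by apply: ginv_single_cache_bound inv; [move=> s; exact: Ubound_ge | exact: Ubound_ge0].
- exact: ginv_flow_c inv.
- exact: ginv_level inv.
- have : 0 <= \sum_s gflow_s st s by apply: sumr_ge0 => s _; case/andP: (ginv_flow_s inv s).
  by rewrite balance; lra.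
- move=> left; rewrite balance.
  have := final_residual_bandwidth (fun s => Ubound_ge _) Ubound_ge0 (fun s => d_ge1 _)
                                    inv stop left.
  lra.
Qed.

Lemma theta_eq_of_residual c t C : 0 <= C ->
  (forall k F, (0 < N k)%N -> residual_spec k F -> `|F c - (N k)%:R * t| <= C) ->
  theta c = lb c - t.
Proof.
move=> C_ge0 F_close.
have mU_ge0 : 0 <= m%:R * Ubound by rewrite mulr_ge0 ?Ubound_ge0.
apply: (cvg_eq_of_dist_le_inv (cvg_served (c := c)) (addr_ge0 mU_ge0 C_ge0) N_oo).
move=> k k_gt0.
have [F spec] := residual_exists k; have [served_close _ _ _ _] := spec.
have n_gt0 : 0 < (N k)%:R :> R by rewrite ltr0n.
have -> : served k [set c] / (N k)%:R - (lb c - t)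
          = (served k [set c] - ((N k)%:R * lb c - F c) - (F c - (N k)%:R * t)) / (N k)%:R.
  by field; rewrite lt0r_neq0.
rewrite normrM normfV (gtr0_norm n_gt0) ler_pM2r ?invr_gt0 //.
have := F_close k F k_gt0 spec; have := served_close c; rewrite !ler_norml.
by move=> /andP[? ?] /andP[? ?]; apply/andP; split; lra.
Qed.

Lemma q_multi_cache0 i j (K : {set 'I_m}) : (2 <= #|K|)%N -> q i j K = 0.
Proof.
move=> K_ge2; have mC_ge0 : 0 <= m%:R / alpha i j by rewrite divr_ge0.
apply: (cvg_eq_of_dist_le_inv (q_lim i j K) mC_ge0 N_oo) => k k_gt0.
have cnt_le : (#|[set s | (tau k s == (i, j)) && (cache (a k) s == K)]| <= m)%N.
  apply: leq_trans (multi_cache_card k); apply: subset_leq_card.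
  by apply/fintype.subsetP => s; rewrite !inE => /andP[_ /eqP ->].
rewrite subr0 /qfrac card_type.
have [->|alpha_ne0] := eqVneq (alpha i j) 0; first by rewrite !(mulr0, invr0, normr0).
rewrite ger0_norm ?divr_ge0 ?mulr_ge0 // -mulrA -invfM [alpha i j * _]mulrC.
by rewrite ler_pM2r ?ler_nat // invr_gt0 mulr_gt0 ?ltr0n // lt_def alpha_ne0 alpha_ge0.
Qed.

Lemma theta_underloaded : lbar <= cap -> forall c : 'I_m, theta c = lb c.
Proof.
move=> under c; rewrite -[lb c]subr0.
have mU_ge0 : 0 <= m%:R * Ubound by rewrite mulr_ge0 ?Ubound_ge0.
apply: (theta_eq_of_residual mU_ge0) => k F k_gt0 [_ F_bd _ _ F_hi].
have F_ge0 c' : 0 <= F c' by case/andP: (F_bd c').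
rewrite mulr0 subr0 ger0_norm //.
have [[c' Fc'_gt0]|no_left] := pselect (exists c', 0 < F c'); last first.
  by apply: le_trans mU_ge0; rewrite leNgt; apply/negP => ?; apply: no_left; exists c.
have Fc_le : F c <= \sum_c' F c' by rewrite (bigD1 c) //= lerDl sumr_ge0.
have := F_hi (ex_intro _ c' Fc'_gt0).
have : (N k)%:R * (lbar - cap) <= 0 by rewrite mulr_ge0_le0 ?subr_le0.
lra.
Qed.

Lemma theta_overloaded (cs : 'I_m) : cap < lbar ->
  (forall c, (c.+1 < m)%N -> lb c.+1 < lb c) ->
  \sum_(0 <= c < cs) lb c - cs%:R * lb cs < cap ->
  cap <= \sum_(0 <= c < cs.+1) lb c - cs.+1%:R * lbz m lb cs.+1 ->
  forall c : 'I_m, theta c = if (c <= cs)%N then lb c - water_level lb cap cs else 0.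
Proof.
move=> over decr lo hi c; set L := water_level lb cap cs.
have -> : (if (c <= cs)%N then lb c - L else 0) = lb c - Num.min (lb c) L.
  by rewrite min_water_level //; case: ifP => _; rewrite ?subrr.
have [c0 c0E] : exists c0 : 'I_m, c0 = 0%N :> nat.
  by exists (Ordinal (leq_ltn_trans (leq0n cs) (ltn_ord cs))).
have C_ge0 : 0 <= (m%:R + m%:R + 1) * Ubound by rewrite mulr_ge0 ?Ubound_ge0.
apply: (theta_eq_of_residual C_ge0) => k F k_gt0 [_ F_bd F_level F_lo F_hi].
have n_gt0 : 0 < (N k)%:R :> R by rewrite ltr0n.
have lam_max (c' : 'I_m) : (N k)%:R * lb c' <= (N k)%:R * lb c0.
  by rewrite ler_pM2l // c0E; apply: (lb_nonincreasing decr (leq0n c')); apply: ltn_ord.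
have L_le : (N k)%:R * L <= (N k)%:R * lb c0.
  rewrite ler_pM2l // c0E; have /andP[_ L_lt] := water_level_bounds lo hi.
  exact: le_trans (ltW L_lt) (lb_nonincreasing decr (leq0n _) (ltn_ord cs)).
have sum_L : \sum_(c' < m) Num.min ((N k)%:R * lb c') ((N k)%:R * L)
              = (N k)%:R * (lbar - cap).
  rewrite -(eq_bigr _ (fun (c' : 'I_m) _ => minr_pMr _ _ (ltW n_gt0))) -mulr_sumr.
  by rewrite sum_min_water_level.
have F_left : exists c', 0 < F c'.
  have F_sum_gt0 : 0 < \sum_c' F c'.
    by apply: lt_le_trans F_lo; rewrite mulr_gt0 // subr_gt0.
  have [c' /andP[_ Fc'_gt0]] := psumr_neq0P (fun c' _ => proj1 (andP (F_bd c')))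
                                            (elimN eqP (lt0r_neq0 F_sum_gt0)).
  by exists c'.
rewrite (minr_pMr _ _ (ltW n_gt0)).
apply: (waterfill_close lam_max Ubound_ge0 F_bd F_level _ sum_L L_le).
by rewrite F_lo F_hi.
Qed.

End Asymptotics.

Theorem lemma1 (R : realType) (I J : finType) (U : I -> R) (d : J -> nat)
  (alpha : I -> J -> R) (m : nat) (lb : nat -> R)
  (N : nat -> nat) (tau : forall k, 'I_(N k) -> I * J)
  (a : forall k, {set 'I_(N k) * 'I_m})
  (q : I -> J -> {set 'I_m} -> R) :
  (forall i, 0 < U i) ->
  (forall j, (1 <= d j)%N) ->
  (forall i j, 0 <= alpha i j) ->
  \sum_(i : I) \sum_(j : J) alpha i j = 1 ->
  (forall c, (c < m)%N -> 0 < lb c) ->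
  (* a sequence of instances whose sizes tend to infinity *)
  (forall M, exists k0, forall k, (k0 <= k)%N -> (M <= N k)%N) ->
  (* exactly n * alpha_ij servers of each type (i,j) *)
  (forall k i j, #|[set s | tau k s == (i, j)]|%:R = (N k)%:R * alpha i j) ->
  (* a k is an output of greedy on the k-th instance *)
  (forall k, greedy_output (fun s => U (tau k s).1) (fun s => d (tau k s).2)
                           (fun c : 'I_m => (N k)%:R * lb c) (a k)) ->
  (* q is the limit of the fractions q^(n) *)
  (forall i j K, ((fun k => qfrac R (tau k) (a k) i j K) @ \oo --> q i j K)%classic) ->
  let lbar := \sum_(0 <= c < m) lb c in
  let rho := lbar / (\sum_(i : I) \sum_(j : J) alpha i j * U i) in
  let theta := fun c : 'I_m =>
    \sum_(i : I) \sum_(j : J) alpha i j * U i * q i j [set c] in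
  [/\ (forall i j (K : {set 'I_m}), (2 <= #|K|)%N -> q i j K = 0),
      (rho <= 1 -> forall c : 'I_m, theta c = lb c) &
      (1 < rho ->
       (forall c, (c.+1 < m)%N -> lb c.+1 < lb c) ->
       forall cs : 'I_m,
         \sum_(0 <= c < cs) lb c - (cs%:R) * lb cs < lbar / rho ->
         lbar / rho <= \sum_(0 <= c < cs.+1) lb c - (cs.+1%:R) * lbz m lb cs.+1 ->
         forall c : 'I_m,
           theta c = if (c <= cs)%N
                     then lb c - (cs.+1%:R)^-1 * (\sum_(0 <= c' < cs.+1) lb c' - lbar / rho)
                     else 0)].
Proof.
move=> U_gt0 d_ge1 alpha_ge0 alpha_sum1 lb_gt0 N_oo card_type a_greedy q_lim.
move=> lbar rho theta; have cap_pos := cap_gt0 U_gt0 alpha_ge0 alpha_sum1.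
have rho_le1 : (rho <= 1) = (lbar <= cap U alpha) by rewrite ler_pdivrMr // mul1r.
have rho_gt1 : (1 < rho) = (cap U alpha < lbar) by rewrite ltr_pdivlMr // mul1r.
split.
- exact: q_multi_cache0 U_gt0 alpha_ge0 lb_gt0 N_oo card_type a_greedy q_lim.
- rewrite rho_le1.
  exact: theta_underloaded U_gt0 d_ge1 lb_gt0 N_oo card_type a_greedy q_lim.
- rewrite rho_gt1 => over; have -> : lbar / rho = cap U alpha.
    by rewrite /rho invf_div mulrCA divff ?mulr1 // gt_eqF // (lt_trans cap_pos over).
  move=> decr cs lo hi c.
  exact: (theta_overloaded U_gt0 d_ge1 lb_gt0 N_oo card_type a_greedy q_lim over
                           decr lo hi c).
Qed.
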